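(* Let $A$ be a Noetherian integral domain. Every sublocalization over $A$ is a localization of $A$ if and only if each associated prime of a principal ideal of $A$ is the radical of a principal ideal. In particular, if $A$ has these equivalent properties, then nonzero principal ideals of $A$ have no embedded associated primes.
   Context: For an integral domain $A$ with field of fractions $K$, an overring is a subring of $K$ containing $A$. An overring $B$ is a localization of $A$ if $B=S^{-1}A$ for a multiplicatively closed set $S$ of nonzero elements of $A$; $B$ is a sublocalization over $A$ if $B$ is an intersection of localizations of $A$ (an empty intersection being $K$). A prime $P$ of $A$ is an associated prime of an ideal $I$ if there is $a\in A$ such that $P$ is a minimal prime over $(I:_A a)=\{r\in A: ra\in I\}$. *)

From mathcomp Require Import all_boot all_algebra fraction.
Set Implicit Arguments. Unset Strict Implicit. Unset Printing Implicit Defensive.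
Import GRing.Theory.
Local Open Scope ring_scope.

Section Defs.
Variable R : idomainType.

Definition is_ideal (I : R -> Prop) : Prop :=
  [/\ I 0, (forall x y, I x -> I y -> I (x + y)) & (forall r x, I x -> I (r * x))].

Definition noetherian : Prop :=
  forall I : nat -> R -> Prop, (forall n, is_ideal (I n)) ->
    (forall n x, I n x -> I n.+1 x) ->
    exists N, forall m x, (N <= m)%N -> I m x -> I N x.

Definition is_prime (P : R -> Prop) : Prop :=
  [/\ is_ideal P, ~ P 1 & forall a b, P (a * b) -> P a \/ P b].

Definition principal (b : R) : R -> Prop := fun x => exists r, x = r * b.

Definition radical (J : R -> Prop) : R -> Prop := fun x => exists n, J (x ^+ n).

Definition colon (I : R -> Prop) (a : R) : R -> Prop := fun r => I (r * a).

Definition minimal_prime_over (J P : R -> Prop) : Prop :=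
  [/\ is_prime P, (forall x, J x -> P x) &
      forall Q, is_prime Q -> (forall x, J x -> Q x) -> (forall x, Q x -> P x) ->
        forall x, P x -> Q x].

Definition assoc_prime (I P : R -> Prop) : Prop :=
  exists a, minimal_prime_over (colon I a) P.

Definition K := {fraction R}.
Definition inK (a : R) : K := @FracField.tofrac R a.

Definition mult_closed_nonzero (S : R -> Prop) : Prop :=
  [/\ S 1, (forall s t, S s -> S t -> S (s * t)) & forall s, S s -> s != 0].

Definition is_localization (B : K -> Prop) : Prop :=
  exists S, mult_closed_nonzero S /\
    forall x, B x <-> exists a s, S s /\ x = inK a / inK s.

Definition is_sublocalization (B : K -> Prop) : Prop :=
  exists F : (K -> Prop) -> Prop, (forall L, F L -> is_localization L) /\
    forall x, B x <-> (forall L, F L -> L x).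

End Defs.

From mathcomp Require Import all_boot all_algebra fraction ring.
From Stdlib Require Import ClassicalEpsilon Classical.
Set Implicit Arguments. Unset Strict Implicit. Unset Printing Implicit Defensive.
Import GRing.Theory.
Local Open Scope ring_scope.

(* In a Noetherian ring, a colon ideal (I : a) that misses a multiplicative
   set S can be enlarged to a prime colon ideal (I : ya) that still misses S.
   Given a family of localizations, let S be the set of elements inverted in
   all of them.  If n/d lies in their intersection but not in S^-1 A, this
   yields an associated prime Q of dA missing S; if Q = rad(cA), some member
   T^-1 A of the family does not invert c, yet writing n/d = a/t there puts t
   in Q, so a power of t is a multiple of c.  Conversely, if P = (bA : w) is
   an associated prime and S^-1 A is the intersection of the A_M over the
   primes M not containing P, then w/b lies in S^-1 A, so S meets P; any c in
   S and P satisfies P = rad(cA), because c is a unit in each of these A_M.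
   Finally, if P = rad(cA), Krull's principal ideal theorem says that P has
   height at most one, so it cannot strictly contain the nonzero associated
   prime Q of bA.  To prove it we show that descending chains of P-saturated
   ideals containing c stabilise (A_P / cA_P is Artinian), apply this to the
   chain generated by the contractions of q^n A_Q and c, and conclude with
   Nakayama's lemma. *)

Local Notation "I `<=` J" := (forall x, I x -> J x) (at level 70, no associativity).

Section Ideals.
Variable R : idomainType.
Implicit Types (I J L M N P Q S : R -> Prop) (a c s x : R).

Lemma ideal0 I : is_ideal I -> I 0. Proof. by case. Qed.

Lemma idealD I x y : is_ideal I -> I x -> I y -> I (x + y).
Proof. by case=> _ + _; apply. Qed.

Lemma idealMl I r x : is_ideal I -> I x -> I (r * x).
Proof. by case=> _ _; apply. Qed.

Lemma idealMr I r x : is_ideal I -> I x -> I (x * r).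
Proof. by rewrite mulrC; apply: idealMl. Qed.

Lemma idealB I x y : is_ideal I -> I x -> I y -> I (x - y).
Proof. by move=> HI Ix Iy; rewrite -mulN1r; apply: idealD => //; apply: idealMl. Qed.

Lemma ideal1 I x : is_ideal I -> I 1 -> I x.
Proof. by move=> HI I1; rewrite -[x]mulr1; apply: idealMl. Qed.

Lemma principal_ideal c : is_ideal (principal c).
Proof.
split; first by exists 0; rewrite mul0r.
- by move=> _ _ [r ->] [s ->]; exists (r + s); rewrite mulrDl.
- by move=> r _ [s ->]; exists (r * s); rewrite mulrA.
Qed.

Lemma principal_id c : principal c c. Proof. by exists 1; rewrite mul1r. Qed.

Lemma colon_ideal I a : is_ideal I -> is_ideal (colon I a).
Proof.
move=> HI; split; rewrite /colon.
- by rewrite mul0r; apply: ideal0.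
- by move=> x y Ix Iy; rewrite mulrDl; apply: idealD.
- by move=> r x Ix; rewrite -mulrA; apply: idealMl.
Qed.

Lemma colonM I a y r : colon I (y * a) r = colon I a (r * y).
Proof. by rewrite /colon mulrA. Qed.

Lemma colon_sub_mul I a y : is_ideal I -> colon I a `<=` colon I (y * a).
Proof. by move=> HI r Ir; rewrite colonM /colon mulrAC; apply: idealMr. Qed.

Lemma prime_ideal P : is_prime P -> is_ideal P. Proof. by case. Qed.

Lemma prime_neq1 P : is_prime P -> ~ P 1. Proof. by case. Qed.

Lemma primeM P a b : is_prime P -> P (a * b) -> P a \/ P b.
Proof. by case=> _ _; apply. Qed.

Lemma prime_pow P x n : is_prime P -> P (x ^+ n) -> P x.
Proof.
move=> HP; elim: n => [|n IH]; first by rewrite expr0 => /(prime_neq1 HP).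
by rewrite exprS => /(primeM HP) [] // /IH.
Qed.

Lemma prime_compl_neq0 P s : is_prime P -> ~ P s -> s != 0.
Proof. by move=> HP; apply: contra_notN => /eqP ->; apply: ideal0 (prime_ideal HP). Qed.

Lemma radical_sub_prime P c : is_prime P -> P c -> radical (principal c) `<=` P.
Proof.
move=> HP Pc x [n [r Exn]]; apply: (prime_pow (n := n) HP).
by rewrite Exn; apply: idealMl (prime_ideal HP) Pc.
Qed.

Definition multiplicative S := S 1 /\ forall s t, S s -> S t -> S (s * t).

Definition compl P : R -> Prop := fun s => ~ P s.

Lemma compl_prime_multiplicative P : is_prime P -> multiplicative (compl P).
Proof. by move=> HP; split=> [|s t Ps Pt /(primeM HP) []]; first exact: prime_neq1. Qed.

Lemma powers_multiplicative a : multiplicative (fun s => exists n, s = a ^+ n).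
Proof.
by split=> [|_ _ [m ->] [n ->]]; [exists 0%N | exists (m + n)%N; rewrite exprD].
Qed.

Definition saturation S I : R -> Prop := fun x => exists2 s, S s & I (s * x).

Definition saturated S I := forall s x, S s -> I (s * x) -> I x.

Section Saturation.
Variable S : R -> Prop.
Hypothesis mulS : multiplicative S.

Lemma saturation_ideal I : is_ideal I -> is_ideal (saturation S I).
Proof.
case: mulS => S1 SM HI; split.
- by exists 1; rewrite // mulr0; apply: ideal0.
- move=> x y [s Ss Isx] [t St Ity]; exists (s * t); first exact: SM.
  have -> : s * t * (x + y) = t * (s * x) + s * (t * y) by ring.
  by apply: idealD => //; apply: idealMl.
- by move=> r x [s Ss Isx]; exists s; rewrite // mulrCA; apply: idealMl.
Qed.

Lemma sub_saturation I : I `<=` saturation S I.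
Proof. by case: mulS => S1 _ x Ix; exists 1; rewrite // mul1r. Qed.

Lemma saturation_saturated I : saturated S (saturation S I).
Proof.
case: mulS => _ SM s x Ss [t St Itsx]; exists (t * s); first exact: SM.
by rewrite -mulrA.
Qed.

End Saturation.

Lemma saturation_min S I J : saturated S J -> I `<=` J -> saturation S I `<=` J.
Proof. by move=> satJ IJ x [s Ss /IJ /satJ]; apply. Qed.

Lemma saturation_mono S I J : I `<=` J -> saturation S I `<=` saturation S J.
Proof. by move=> IJ x [s Ss /IJ]; exists s. Qed.

Definition adjoin I a : R -> Prop := fun z => exists m r, I m /\ z = m + r * a.

Fixpoint adjoin_seq I (l : seq R) : R -> Prop :=
  if l is a :: l' then adjoin (adjoin_seq I l') a else I.

Lemma adjoin_ideal I a : is_ideal I -> is_ideal (adjoin I a).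
Proof.
move=> HI; split.
- by exists 0, 0; rewrite mul0r addr0; split=> //; apply: ideal0.
- move=> _ _ [m [r [Im ->]]] [m' [r' [Im' ->]]].
  by exists (m + m'), (r + r'); split; [apply: idealD | ring].
- move=> s _ [m [r [Im ->]]].
  by exists (s * m), (s * r); split; [apply: idealMl | ring].
Qed.

Lemma sub_adjoin I a : I `<=` adjoin I a.
Proof. by move=> x Ix; exists x, 0; rewrite mul0r addr0. Qed.

Lemma adjoin_id I a : is_ideal I -> adjoin I a a.
Proof. by move=> HI; exists 0, 1; rewrite mul1r add0r; split=> //; apply: ideal0. Qed.

Lemma adjoin_min I J a : is_ideal J -> I `<=` J -> J a -> adjoin I a `<=` J.
Proof. by move=> HJ IJ Ja _ [m [r [/IJ Jm ->]]]; apply: idealD => //; apply: idealMl. Qed.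

Lemma adjoin_mono I J a : I `<=` J -> adjoin I a `<=` adjoin J a.
Proof. by move=> IJ _ [m [r [/IJ Jm ->]]]; exists m, r. Qed.

Lemma adjoin_seq_ideal I l : is_ideal I -> is_ideal (adjoin_seq I l).
Proof. by move=> HI; elim: l => [|a l IH] //=; apply: adjoin_ideal. Qed.

Lemma sub_adjoin_seq I l : I `<=` adjoin_seq I l.
Proof. by elim: l => [|a l IH] //= x /IH; apply: sub_adjoin. Qed.

Lemma saturation_nakayama P L M c l :
  is_prime P -> P c -> is_ideal L ->
  (forall x, M x -> exists t y z, [/\ compl P t, L y, M z & t * x = y + c * z]) ->
  {in l, forall g, M g} -> M `<=` adjoin_seq L l -> M `<=` saturation (compl P) L.
Proof.
move=> HP Pc HL reduce l_in_M M_sub.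
have mulP := compl_prime_multiplicative HP.
have {M_sub} : M `<=` saturation (compl P) (adjoin_seq L l).
  by move=> x /M_sub; apply: sub_saturation.
elim: l l_in_M => [//|g l IH] /= l_in_M M_sub; apply: IH => [h l_h|].
  by apply: l_in_M; rewrite inE l_h orbT.
set N := adjoin_seq L l; have idN : is_ideal N by apply: adjoin_seq_ideal.
suff Ng : saturation (compl P) N g.
  move=> x /M_sub; apply: saturation_min; first exact: saturation_saturated.
  by apply: adjoin_min; [apply: saturation_ideal | apply: sub_saturation |].
have [t1 [y1 [z1 [Pt1 Ly1 Mz1 Et1g]]]] := reduce g (l_in_M g (mem_head _ _)).
have [t2 Pt2 [n2 [r2 [Nn2 Et2z1]]]] := M_sub z1 Mz1.
exists (t2 * t1 - c * r2).
  move=> Pu; case: mulP => _ /(_ t2 t1 Pt2 Pt1); apply.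
  rewrite -[t2 * t1](subrK (c * r2)); apply: idealD (prime_ideal HP) Pu _.
  exact: idealMr (prime_ideal HP) Pc.
have -> : (t2 * t1 - c * r2) * g = t2 * y1 + c * (t2 * z1 - r2 * g).
  by rewrite mulrBl -mulrA Et1g; ring.
rewrite Et2z1 addrK; apply: idealD => //; apply: idealMl => //.
exact: sub_adjoin_seq.
Qed.

End Ideals.

Section Noetherian.
Variable R : idomainType.
Hypothesis noethR : noetherian R.
Implicit Types (I J M P S : R -> Prop) (a c x : R).

Lemma noetherian_maximal (T : Type) (good : T -> Prop) (g : T -> R -> Prop) :
  (forall t, good t -> is_ideal (g t)) -> (exists t, good t) ->
  exists2 t, good t & forall t', good t' -> g t `<=` g t' -> g t' `<=` g t.
Proof.
move=> idg [t0 good_t0]; apply: NNPP => no_max.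
have grow (s : {t | good t}) : {s' : {t | good t} |
    g (sval s) `<=` g (sval s') /\ exists2 x, g (sval s') x & ~ g (sval s) x}.
  apply: constructive_indefinite_description; case: s => t good_t /=.
  apply: NNPP => no_grow; apply: no_max; exists t => // t' good_t' le_tt' x gt'x.
  apply: NNPP => gtx; apply: no_grow; exists (exist _ t' good_t').
  by split=> //; exists x.
pose ch n := iter n (fun s => sval (grow s)) (exist _ t0 good_t0).
have [N stable] := noethR (I := fun n => g (sval (ch n)))
  (fun n => idg _ (svalP (ch n))) (fun n => proj1 (svalP (grow (ch n)))).
have [x gx ngx] := proj2 (svalP (grow (ch N))).
by apply: ngx; apply: (stable N.+1).
Qed.

Lemma colon_prime_avoiding I S a : is_ideal I -> multiplicative S ->
  (forall s, S s -> ~ colon I a s) ->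
  exists y, is_prime (colon I (y * a)) /\ forall s, S s -> ~ colon I (y * a) s.
Proof.
move=> HI [S1 SM] avoid_a.
have avoid_1a : forall s, S s -> ~ colon I (1 * a) s by rewrite mul1r.
have [y avoid_y max_y] := noetherian_maximal
  (good := fun y => forall s, S s -> ~ colon I (y * a) s)
  (fun y _ => colon_ideal (y * a) HI) (ex_intro _ 1 avoid_1a).
pose Q := colon I (y * a).
exists y; split=> //; split; [exact: colon_ideal | by move/avoid_y; apply | ].
move=> r s Qrs; apply: NNPP => /not_or_and [nQr nQs].
(* For [t] in [S], [(I : t y a)] still misses [S], so by maximality it is [Q]. *)
have Qt t : S t -> colon I (t * y * a) `<=` Q.
  move=> St; apply: max_y; last by move=> x; rewrite -mulrA; apply: colon_sub_mul.
  by move=> u Su; rewrite -mulrA colonM => /avoid_y; apply; apply: SM.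
have [t St rt] : exists2 t, S t & colon I (r * y * a) t.
  apply: NNPP => no_t; apply: nQs.
  apply: (max_y (r * y)); [ | by move=> x; rewrite -mulrA; apply: colon_sub_mul | ].
  - by move=> t St Irt; apply: no_t; exists t.
  - by rewrite -mulrA colonM (mulrC s).
by apply: nQr; apply: (Qt t St); move: rt; rewrite -!mulrA !colonM (mulrC t).
Qed.

Lemma ideal_colon_prime_avoiding I S : is_ideal I -> multiplicative S ->
  (forall s, S s -> ~ I s) ->
  exists y, is_prime (colon I y) /\ forall s, S s -> ~ colon I y s.
Proof.
move=> HI mulS avoid.
have avoid1 s : S s -> ~ colon I 1 s by rewrite /colon mulr1; apply: avoid.
by have [y] := colon_prime_avoiding HI mulS avoid1; rewrite mulr1; exists y.
Qed.

Lemma minimal_prime_over_colon I a P : is_ideal I ->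
  minimal_prime_over (colon I a) P -> exists w, forall x, P x <-> colon I w x.
Proof.
move=> HI [HP IaP minP].
have avoid : forall s, compl P s -> ~ colon I a s by move=> s Ps /IaP.
have [y [HQ avoidQ]] := colon_prime_avoiding HI (compl_prime_multiplicative HP) avoid.
have QP : colon I (y * a) `<=` P by move=> x Qx; apply: NNPP => /avoidQ; apply.
exists (y * a) => x; split=> [|/QP //].
by apply: minP => // z; apply: colon_sub_mul.
Qed.

Lemma prime_avoiding_radical J p : is_ideal J -> ~ radical J p ->
  exists M, [/\ is_prime M, J `<=` M & ~ M p].
Proof.
move=> HJ notJp.
have avoid s : (exists n, s = p ^+ n) -> ~ J s by move=> [n ->] Jpn; apply: notJp; exists n.
have [y [HM avoidM]] := ideal_colon_prime_avoiding HJ (powers_multiplicative p) avoid.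
exists (colon J y); split=> // [x Jx|]; first exact: idealMr.
by apply: (avoidM p); exists 1%N; rewrite expr1.
Qed.

Lemma noetherian_adjoin_seq I M : is_ideal I -> is_ideal M ->
  exists2 l, {in l, forall g, M g} & M `<=` adjoin_seq I l.
Proof.
move=> HI HM; have nil_in_M : {in [::], forall g, M g} by [].
have [l l_in_M max_l] := noetherian_maximal (good := fun l => {in l, forall g, M g})
  (fun l _ => adjoin_seq_ideal l HI) (ex_intro _ [::] nil_in_M).
exists l => // x Mx; apply: (max_l (x :: l)) => /=.
- by move=> g; rewrite inE => /predU1P [-> | /l_in_M].
- exact: sub_adjoin.
- exact/adjoin_id/adjoin_seq_ideal.
Qed.

End Noetherian.

Definition descending (R : idomainType) (J : nat -> R -> Prop) := forall n, J n.+1 `<=` J n.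

Definition stationary (R : idomainType) (J : nat -> R -> Prop) :=
  exists N, forall m, (N <= m)%N -> J N `<=` J m.

Lemma descending_le (R : idomainType) (J : nat -> R -> Prop) :
  descending J -> forall n m, (n <= m)%N -> J m `<=` J n.
Proof.
move=> descJ n m /subnKC <-; elim: (m - n)%N => [|k IH] x; first by rewrite addn0.
by rewrite addnS => /descJ /IH.
Qed.

Section PrincipalIdealTheorem.
Variables (R : idomainType) (P : R -> Prop) (c : R).
Hypotheses (noethR : noetherian R) (minP : minimal_prime_over (principal c) P).
Implicit Types (I L Q : R -> Prop) (x : R).

Let primeP : is_prime P. Proof. by case: minP. Qed.
Let mulP := compl_prime_multiplicative primeP.

Definition saturated_chain (J : nat -> R -> Prop) :=
  [/\ forall n, is_ideal (J n), forall n, saturated (compl P) (J n) & descending J].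

Definition chains_above_stationary I :=
  forall J, saturated_chain J -> (forall n, I `<=` J n) -> stationary J.

Lemma saturated_colon_prime I : is_ideal I -> saturated (compl P) I -> ~ I 1 -> I c ->
  exists2 x0, ~ I x0 & P `<=` colon I x0.
Proof.
move=> HI satI nI1 Ic.
have avoid s : compl P s -> ~ I s by move=> Ps Is; apply/nI1/(satI s 1 Ps); rewrite mulr1.
have [y [HM avoidM]] := ideal_colon_prime_avoiding noethR HI mulP avoid.
exists y; first by move=> Iy; apply: (prime_neq1 HM); rewrite /colon mul1r.
case: minP => _ _; apply=> // [_ [r ->]|x Mx].
  by apply: idealMl (colon_ideal y HI) _; apply: idealMr.
by apply: NNPP => /avoidM; apply.
Qed.

Lemma chains_above_stationary_step I x0 :
  is_ideal I -> P `<=` colon I x0 ->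
  chains_above_stationary (saturation (compl P) (adjoin I x0)) ->
  chains_above_stationary I.
Proof.
move=> HI Px0 stL J [idJ satJ descJ] IJ.
have [all_x0 | /not_all_ex_not [n0 nJx0]] := classic (forall n, J n x0).
  apply: stL => // n; apply: saturation_min (satJ n) _.
  exact: adjoin_min (idJ n) (IJ n) (all_x0 n).
pose J' n := saturation (compl P) (adjoin (J n) x0).
have descJ' : descending J' by move=> n; apply/saturation_mono/adjoin_mono/descJ.
have [N stJ'] : stationary J'.
  apply: stL => [|n]; last by apply/saturation_mono/adjoin_mono/IJ.
  split=> // n; last exact: saturation_saturated.
  exact/saturation_ideal/adjoin_ideal.
exists (N + n0)%N => m le_m x Jx.
have [t Pt [j [r [Jj Etx]]]] : J' m x.
  apply: stJ' (leq_trans (leq_addr _ _) le_m) _ _.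
  apply: descending_le descJ' _ _ (leq_addr n0 N) _ _.
  exact/sub_saturation/sub_adjoin.
(* [r] must lie in [P], for otherwise [x0] would lie in the saturated [J (N + n0)]. *)
have Pr : P r.
  apply: NNPP => Pr; apply/nJx0/(descending_le descJ (leq_addl N n0))/(satJ _ r x0 Pr).
  have -> : r * x0 = t * x - j by rewrite Etx addrC addKr.
  apply: idealB => //; first exact: idealMl.
  exact: descending_le descJ _ _ le_m _ Jj.
apply: (satJ m t x Pt); rewrite Etx; apply: idealD => //.
exact/IJ/Px0.
Qed.

Lemma saturated_chains_above_stationary I :
  is_ideal I -> saturated (compl P) I -> I c -> chains_above_stationary I.
Proof.
move=> HI satI Ic; apply: NNPP => nstI.
pose bad I := [/\ is_ideal I, saturated (compl P) I, I c & ~ chains_above_stationary I].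
have [I0 [HI0 satI0 I0c nstI0] maxI0] :=
  noetherian_maximal noethR (good := bad) (g := id) (fun t b => let: And4 h _ _ _ := b in h)
  (ex_intro _ I (And4 HI satI Ic nstI)).
apply: nstI0; have [I01 | nI01] := classic (I0 1).
  move=> J [idJ _ _] I0J; exists 0%N => m _ x _.
  exact: ideal1 (idJ m) (I0J m 1 I01).
have [x0 nI0x0 Px0] := saturated_colon_prime HI0 satI0 nI01 I0c.
apply: chains_above_stationary_step Px0 _ => //; apply: NNPP => nstL.
pose L := saturation (compl P) (adjoin I0 x0).
have I0L : I0 `<=` L by move=> x I0x; apply: (sub_saturation mulP); apply: sub_adjoin.
apply/nI0x0/(maxI0 L _ I0L)/(sub_saturation mulP)/adjoin_id => //.
split=> //; [exact/saturation_ideal/adjoin_ideal | exact: saturation_saturated | exact: I0L].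
Qed.

Lemma saturated_chain_stationary J :
  saturated_chain J -> (forall n, J n c) -> stationary J.
Proof.
move=> [idJ satJ descJ] Jc.
apply: (saturated_chains_above_stationary (I := fun x => forall n, J n x)) => //.
- split=> [n|x y Jx Jy n|r x Jx n]; [exact: ideal0|exact: idealD|exact: idealMl].
- by move=> s x Ps Jsx n; apply: (satJ n s).
Qed.

Lemma krull_principal_ideal Q :
  is_prime Q -> Q `<=` P -> ~ P `<=` Q -> forall q, Q q -> q = 0.
Proof.
move=> HQ QP nPQ q Qq; have [// | q0] := eqVneq q 0; exfalso.
have mulQ := compl_prime_multiplicative HQ.
have Pc : P c by case: minP => _ + _; apply; apply: principal_id.
have nQc : ~ Q c.
  move=> Qc; apply: nPQ; case: minP => _ _; apply=> // _ [r ->].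
  exact: idealMl (prime_ideal HQ) Qc.
(* [I n] is the contraction of [q^n A_Q] to [A]. *)
pose I n := saturation (compl Q) (principal (q ^+ n)).
have idI n : is_ideal (I n) by apply/saturation_ideal/principal_ideal.
have descI : descending I.
  by move=> n; apply: saturation_mono => _ [r ->]; exists (r * q); rewrite exprS; ring.
pose J n := saturation (compl P) (adjoin (I n) c).
have [N stJ] : stationary J.
  apply: saturated_chain_stationary => [|n]; last exact/sub_saturation/adjoin_id.
  split=> [n|n|n]; [exact/saturation_ideal/adjoin_ideal | exact: saturation_saturated |].
  exact/saturation_mono/adjoin_mono/descI.
have reduce x :
    I N x -> exists t y z, [/\ compl P t, I N.+1 y, I N z & t * x = y + c * z].
  move=> INx; have [t Pt [y [z [INy Etx]]]] := stJ N.+1 (leqnSn N) x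
    (sub_saturation mulP (sub_adjoin c INx)).
  exists t, y, z; split=> //; last by rewrite Etx mulrC.
  apply: (saturation_saturated mulQ nQc).
  have -> : c * z = t * x - y by rewrite Etx addrC addKr mulrC.
  by apply: (idealB (idI N)); [exact: idealMl | exact: descI].
have [l l_in sub_l] := noetherian_adjoin_seq noethR (idI N.+1) (idI N).
have [t Pt [s Qs [r Est]]] := saturation_nakayama primeP Pc (idI N.+1) reduce l_in sub_l
  (sub_saturation mulQ (principal_id _)).
have Est' : s * t = r * q.
  by apply: (mulIf (expf_neq0 N q0)); rewrite -mulrA Est exprS; ring.
have : Q (s * t) by rewrite Est'; exact: idealMl (prime_ideal HQ) Qq.
by case/(primeM HQ) => [/Qs | /QP /Pt].
Qed.

End PrincipalIdealTheorem.

Section Fractions.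
Variable R : idomainType.
Implicit Types (a b c d s t : R) (L : K R -> Prop) (Q : R -> Prop).

Lemma inKM a b : inK (a * b) = inK a * inK b. Proof. exact: rmorphM. Qed.

Lemma inK1 : inK (1 : R) = 1. Proof. exact: rmorph1. Qed.

Lemma inK_eq0 a : (inK a == 0) = (a == 0). Proof. exact: tofrac_eq0. Qed.

Lemma frac_eq a b c d : b != 0 -> d != 0 ->
  (inK a / inK b = inK c / inK d) <-> a * d = c * b.
Proof.
rewrite -!inK_eq0 => b0 d0; split=> [/eqP | E]; last first.
  by apply/eqP; rewrite eqr_div // -!inKM E.
by rewrite eqr_div // -!inKM /inK tofrac_eq => /eqP.
Qed.

Lemma inv_frac_eq a c d : c != 0 -> d != 0 -> (inK c)^-1 = inK a / inK d <-> d = a * c.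
Proof. by move=> c0 d0; rewrite -[_^-1]mul1r -inK1 frac_eq // mul1r. Qed.

Local Open Scope quotient_scope.

Lemma frac_repr (x : K R) : exists n d, d != 0 /\ x = inK n / inK d.
Proof.
rewrite /inK -[x]reprK; set r := repr x.
exists (frac r).1, (frac r).2; split; first exact: denom_ratioP.
have -> : \pi_(K R) r =
    \pi_(K R) (FracField.mulf (Ratio (frac r).1 1) (FracField.invf (Ratio (frac r).2 1))).
  apply/eqmodP; rewrite /= FracField.equivfE.
  by rewrite !numden_Ratio ?mulf_neq0 ?oner_neq0 ?denom_ratioP // mulr1 mul1r mulrC.
by rewrite FracField.pi_mul FracField.pi_inv; unlock FracField.tofrac.
Qed.

Close Scope quotient_scope.

Lemma localization_mul L x y : is_localization L -> L x -> L y -> L (x * y).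
Proof.
move=> [T [[_ TM _] defL]] /defL [a [s [Ts ->]]] /defL [a' [s' [Ts' ->]]].
by apply/defL; exists (a * a'), (s * s'); split; [apply: TM | rewrite !inKM invfM; ring].
Qed.

Lemma localization_inK L a : is_localization L -> L (inK a).
Proof. by move=> [T [[T1 _ _] defL]]; apply/defL; exists a, 1; rewrite inK1 divr1. Qed.

Lemma localization_inv_radical L (T : R -> Prop) c t :
  mult_closed_nonzero T -> (forall x, L x <-> exists a s, T s /\ x = inK a / inK s) ->
  c != 0 -> T t -> radical (principal c) t -> L (inK c)^-1.
Proof.
move=> [T1 TM T0] defL c0 Tt [k [r Etk]].
have Ttk : T (t ^+ k) by elim: k {Etk} => [|k IH]; rewrite ?expr0 // exprS; apply: TM.
by apply/defL; exists r, (t ^+ k); split=> //; apply/inv_frac_eq => //; apply: T0.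
Qed.

Definition localization_at Q : K R -> Prop :=
  fun x => exists a s, ~ Q s /\ x = inK a / inK s.

Lemma localization_at_prime Q : is_prime Q -> is_localization (localization_at Q).
Proof.
move=> HQ; have [Q1 QM] := compl_prime_multiplicative HQ.
by exists (compl Q); split=> //; split=> // s; apply: prime_compl_neq0.
Qed.

Lemma localization_at_inv Q c : is_prime Q -> c != 0 ->
  localization_at Q (inK c)^-1 -> ~ Q c.
Proof.
move=> HQ c0 [a [s [Qs]]]; rewrite inv_frac_eq ?(prime_compl_neq0 HQ Qs) // => Es Qc.
by apply: Qs; rewrite Es; apply: idealMl (prime_ideal HQ) Qc.
Qed.

Definition common_units (F : (K R -> Prop) -> Prop) s :=
  s != 0 /\ forall L, F L -> L (inK s)^-1.

Lemma common_units_mult_closed F :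
  (forall L, F L -> is_localization L) -> mult_closed_nonzero (common_units F).
Proof.
move=> locF; split=> [|s t [s0 Fs] [t0 Ft]|s []] //.
  by split=> [|L FL]; rewrite ?oner_neq0 // inK1 invr1; apply: localization_inK (locF L FL).
split=> [|L FL]; first by rewrite mulf_neq0.
by rewrite inKM invfM; apply: localization_mul; [apply: locF | apply: Fs | apply: Ft].
Qed.

End Fractions.

Section SublocalizationsAndAssociatedPrimes.
Variable R : idomainType.
Hypothesis noethR : noetherian R.
Implicit Types (P Q : R -> Prop) (b c : R).

Definition assoc_primes_radical_principal :=
  forall b P, assoc_prime (principal b) P ->
    exists c : R, forall x, P x <-> radical (principal c) x.

Lemma assoc_prime_prime b P : assoc_prime (principal b) P -> is_prime P.
Proof. by case=> a []. Qed.

Lemma radical_principal0 x : radical (principal (0 : R)) x <-> x = 0.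
Proof.
split=> [[n [r]] | ->]; last by exists 1%N, 0; rewrite expr1 mulr0.
by rewrite mulr0 => /eqP; rewrite expf_eq0 => /andP [_ /eqP].
Qed.

Lemma radical_principal_minimal P c : is_prime P ->
  (forall x, P x <-> radical (principal c) x) -> minimal_prime_over (principal c) P.
Proof.
move=> HP defP; split=> // [_ [r ->]|Q HQ cQ _ x /defP]; last first.
  by apply: radical_sub_prime => //; apply/cQ/principal_id.
apply: idealMl (prime_ideal HP) _.
by apply/defP; exists 1%N; rewrite expr1; apply: principal_id.
Qed.

Lemma sublocalization_localization (B : K R -> Prop) :
  assoc_primes_radical_principal -> is_sublocalization B -> is_localization B.
Proof.
move=> assocP [F [locF defB]].
have mcS := common_units_mult_closed locF; have [S1 SM S0] := mcS.
exists (common_units F); split=> // x; split=> [Bx|[a [s [[s0 Fs] ->]]]]; last first.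
  apply/defB => L FL; apply: (localization_mul (locF L FL)); last exact: Fs.
  exact: localization_inK (locF L FL).
apply: NNPP => notSx; have [n [d [d0 Ex]]] := frac_repr x.
have avoid s : common_units F s -> ~ colon (principal d) n s.
  by move=> Ss [r Er]; apply: notSx; exists r, s; rewrite Ex frac_eq ?(S0 s Ss) // mulrC Er.
have [y [HQ avoidQ]] := colon_prime_avoiding noethR (principal_ideal d) (conj S1 SM) avoid.
set Q := colon (principal d) (y * n) in HQ avoidQ.
have [c defQ] : exists c, forall x, Q x <-> radical (principal c) x.
  by apply: (assocP d); exists (y * n); split.
have Qc : Q c by apply/defQ; exists 1%N; rewrite expr1; apply: principal_id.
have c0 : c != 0.
  apply: contraNneq d0 => c0; have Qd : Q d by exists (y * n); rewrite mulrC.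
  by move/defQ: Qd; rewrite c0 => /radical_principal0 ->.
have [L FL notLc] : exists2 L, F L & ~ L (inK c)^-1.
  apply: NNPP => allL; apply: (avoidQ c) Qc; split=> // L FL.
  by apply: NNPP => nLc; apply: allL; exists L.
have [T [mcT defL]] := locF L FL; have [_ _ T0] := mcT.
have [a [t [Tt Ext]]] := (defL x).1 ((defB x).1 Bx L FL).
have Qt : Q t.
  have Ent : n * t = a * d by apply/(frac_eq _ _ d0 (T0 t Tt)); rewrite -Ex.
  by exists (y * a); rewrite mulrCA (mulrC t) Ent mulrA.
exact/notLc/(localization_inv_radical mcT defL c0 Tt)/defQ.
Qed.

Lemma localization_assoc_primes_radical_principal :
  (forall B : K R -> Prop, is_sublocalization B -> is_localization B) ->
  assoc_primes_radical_principal.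
Proof.
move=> locB b P [a minP]; have HP : is_prime P by case: minP.
have [w defP] := minimal_prime_over_colon noethR (principal_ideal b) minP.
have [b0 | b0] := eqVneq b 0.
  exists 0 => x; rewrite radical_principal0; split=> [/defP [r] | ->]; last first.
    exact: ideal0 (prime_ideal HP).
  rewrite b0 mulr0 => /eqP; rewrite mulf_eq0 => /orP [/eqP // | /eqP w0].
  by case: (prime_neq1 HP); apply/defP; exists 0; rewrite w0 b0 !mulr0.
pose F L := exists2 Q, is_prime Q /\ ~ P `<=` Q & L = localization_at Q.
have [S [[_ _ S0] defB]] : is_localization (fun x => forall L, F L -> L x).
  by apply: locB; exists F; split=> // L [Q [HQ _] ->]; apply: localization_at_prime.
have [[c Sc Pc] | noSP] := classic (exists2 c, S c & P c).
  exists c => x; split=> [Px | ]; last exact: radical_sub_prime.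
  apply: NNPP => notx.
  have [M [HM cM Mx]] := prime_avoiding_radical noethR (principal_ideal c) notx.
  have Bc : forall L, F L -> L (inK c)^-1 by apply/defB; exists 1, c; rewrite inK1 mul1r.
  have /(localization_at_inv HM (S0 c Sc)) : localization_at M (inK c)^-1.
    by apply: Bc; exists M => //; split=> // PM; apply/Mx/PM.
  by apply; apply/cM/principal_id.
have Bwb : forall L, F L -> L (inK w / inK b).
  move=> _ [Q [HQ nPQ] ->].
  have [p Pp Qp] : exists2 p, P p & ~ Q p.
    by apply: NNPP => allPQ; apply: nPQ => p Pp; apply: NNPP => Qp; apply: allPQ; exists p.
  have [r Er] := (defP p).1 Pp.
  by exists r, p; split=> //; apply/frac_eq; rewrite ?(prime_compl_neq0 HQ Qp) // mulrC.
have [a' [s [Ss Es]]] := (defB _).1 Bwb.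
case: noSP; exists s => //; apply/defP; exists a'.
by move/(frac_eq _ _ b0 (S0 s Ss)): Es; rewrite mulrC.
Qed.

Lemma no_embedded_assoc_primes b P Q : assoc_primes_radical_principal -> b != 0 ->
  assoc_prime (principal b) P -> assoc_prime (principal b) Q -> Q `<=` P -> P `<=` Q.
Proof.
move=> assocP b0 assocbP [a [HQ bQ _]] QP; apply: NNPP => nPQ.
have [c defP] := assocP b P assocbP.
have minP := radical_principal_minimal (assoc_prime_prime assocbP) defP.
have Qb : Q b by apply: bQ; exists a; rewrite mulrC.
by move/eqP: b0; apply; apply: (krull_principal_ideal noethR minP HQ QP nPQ).
Qed.

End SublocalizationsAndAssociatedPrimes.

Theorem corollary2p8 (R : idomainType) (HN : noetherian R) :
  ((forall B : K R -> Prop, is_sublocalization B -> is_localization B) <->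
   (forall (b : R) (P : R -> Prop), assoc_prime (principal b) P ->
      exists c : R, forall x, P x <-> radical (principal c) x)) /\
  ((forall (b : R) (P : R -> Prop), assoc_prime (principal b) P ->
      exists c : R, forall x, P x <-> radical (principal c) x) ->
   forall b : R, b != 0 -> forall P Q : R -> Prop,
     assoc_prime (principal b) P -> assoc_prime (principal b) Q ->
     (forall x, Q x -> P x) -> forall x, P x -> Q x).
Proof.
split; first split.
- exact: localization_assoc_primes_radical_principal.
- by move=> assocP B; apply: sublocalization_localization.
- by move=> assocP b b0 P Q; apply: no_embedded_assoc_primes.
Qed.
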